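(* Let $C$ be a connected rack that is finitely generated (but not necessarily finite). Then the assignment $R\mapsto|\mathrm{Mor}_{\mathcal{R}}(C,R)|$, sending a finite rack $R$ to the number of rack morphisms $C\to R$, is an additive invariant of finite racks, and the induced map $$\Phi_C\colon\mathrm{B}(\mathcal{R})\longrightarrow\mathbb{Z},\qquad b(R)\mapsto|\mathrm{Mor}_{\mathcal{R}}(C,R)|,$$ is a homomorphism of commutative rings.
   Context: A rack is a set $R$ with a binary operation $\rhd$ such that every left multiplication $\ell_a\colon b\mapsto a\rhd b$ is a bijection and $a\rhd(b\rhd c)=(a\rhd b)\rhd(a\rhd c)$ for all $a,b,c$; morphisms preserve $\rhd$. The inner automorphism group $\mathrm{Inn}(R)$ is the subgroup of the symmetric group on $R$ generated by all $\ell_a$; a rack is connected if it is non-empty and $\mathrm{Inn}(R)$ acts transitively on $R$. A subrack is a subset $S$ with $\ell_s(S)=S$ for all $s\in S$; a decomposition of $R$ into $S$ and $T$ means $S,T$ are disjoint subracks (possibly empty) with $S\cup T=R$. An additive invariant of finite racks with values in an abelian group $A$ is an assignment $R\mapsto a(R)\in A$ on finite racks with $a(R_1)=a(R_2)$ whenever $R_1\cong R_2$ and $a(R)=a(S)+a(T)$ whenever $R$ decomposes into $S$ and $T$. The Burnside ring of finite racks $\mathrm{B}(\mathcal{R})$ is the abelian group generated by symbols $b(R)$, one for each finite rack $R$, subject to $b(R_1)=b(R_2)$ whenever $R_1\cong R_2$ and $b(R)=b(S)+b(T)$ whenever $R$ decomposes into $S$ and $T$, with ring structure $b(R)b(R')=b(R\times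 R')$ (cartesian product, componentwise operation) and unit the class of the singleton. *)

From HB Require Import structures.
From mathcomp Require Import all_boot all_order all_algebra.
From mathcomp Require Import boolp classical_sets cardinality.
From mathcomp Require Import finmap.
Set Implicit Arguments. Unset Strict Implicit. Unset Printing Implicit Defensive.
Import GRing.Theory.

Local Open Scope classical_set_scope.

Definition is_rack {T : Type} (op : T -> T -> T) : Prop :=
  (forall a, bijective (op a)) /\
  (forall a b c, op a (op b c) = op (op a b) (op a c)).

Definition is_rack_morphism {T U : Type} (opT : T -> T -> T) (opU : U -> U -> U)
  (f : T -> U) : Prop := forall a b, f (opT a b) = opU (f a) (f b).

Definition is_subrack {T : Type} (op : T -> T -> T) (S : set T) : Prop :=
  forall s, S s -> op s @` S = S.

(* Inn(R): the subgroup of Sym(R) generated by the l_a, described as the set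
   of finite words in the l_a and their inverses. *)
Inductive inn_elt {T : Type} (op : T -> T -> T) : (T -> T) -> Prop :=
  | inn_id : inn_elt op id
  | inn_gen a g : inn_elt op g -> inn_elt op (op a \o g)
  | inn_inv a g h : inn_elt op g -> cancel (op a) h -> cancel h (op a) ->
      inn_elt op (h \o g).

Definition is_connected_rack {T : Type} (op : T -> T -> T) : Prop :=
  (exists x : T, True) /\
  (forall x y : T, exists2 g, inn_elt op g & g x = y).

(* finitely generated: some finite subset is contained in no proper subrack
   (i.e. the subrack it generates is the whole rack) *)
Definition is_fin_gen_rack {T : Type} (op : T -> T -> T) : Prop :=
  exists (k : nat) (gens : 'I_k -> T),
    forall S : set T, is_subrack op S -> range gens `<=` S -> S = setT.

Record finRack := FinRack {
  fr_sort :> finType;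
  fr_op : fr_sort -> fr_sort -> fr_sort;
  fr_ax : is_rack fr_op }.

Definition rack_iso (R1 R2 : finRack) : Prop :=
  exists f : R1 -> R2, bijective f /\ is_rack_morphism (@fr_op R1) (@fr_op R2) f.

Section Subrack.
Variables (R : finRack) (S : {set R}).
Hypothesis hS : is_subrack (@fr_op R) [set x | x \in S].

Lemma subrack_closed (a b : {x : R | x \in S}) : fr_op (val a) (val b) \in S.
Proof.
have : [set x | x \in S] (fr_op (val a) (val b)).
  by rewrite -(hS (valP a)); exists (val b) => //; exact: valP.
by [].
Qed.

Definition subrack_op (a b : {x : R | x \in S}) : {x : R | x \in S} :=
  exist _ (fr_op (val a) (val b)) (subrack_closed a b).

Lemma subrack_ax : is_rack subrack_op.
Proof.
have [bij dist] := fr_ax R; split.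
- move=> a; apply: injF_bij => x y /(congr1 val) /= E.
  by apply: val_inj; exact: (bij_inj (bij (val a)) E).
- by move=> a b c; apply: val_inj; rewrite /= dist.
Qed.

Definition subrack : finRack := FinRack subrack_ax.
End Subrack.

Section Prod.
Variables (R1 R2 : finRack).
Definition prod_op (x y : R1 * R2) : R1 * R2 :=
  (fr_op x.1 y.1, fr_op x.2 y.2).
Lemma prod_ax : is_rack prod_op.
Proof.
have [b1 d1] := fr_ax R1; have [b2 d2] := fr_ax R2; split.
- move=> a; apply: injF_bij => x y [/(bij_inj (b1 a.1)) E1 /(bij_inj (b2 a.2)) E2].
  by case: x y E1 E2 => ? ? [? ?] /= -> ->.
- by move=> a b c; rewrite /prod_op /= d1 d2.
Qed.
Definition prod_rack : finRack := FinRack prod_ax.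
End Prod.

Lemma unit_ax : is_rack (fun _ _ : unit => tt).
Proof. by split=> // a; exists id => -[] // [] []. Qed.
Definition unit_rack : finRack := FinRack unit_ax.

Definition additive_invariant (A : zmodType) (a : finRack -> A) : Prop :=
  (forall R1 R2 : finRack, rack_iso R1 R2 -> a R1 = a R2) /\
  (forall (R : finRack) (S T : {set R})
          (hS : is_subrack (@fr_op R) [set x | x \in S])
          (hT : is_subrack (@fr_op R) [set x | x \in T]),
      (S :&: T)%SET = finset.set0 -> (S :|: T)%SET = finset.setT ->
      a R = (a (subrack hS) + a (subrack hT))%R).

(* (B, b) is (a model of) the Burnside ring of finite racks B(R): b is the
   universal additive invariant (B is the abelian group presented by the
   generators b(R) and the relations of the definition), and the ring
   structure is given by b(R) b(R') = b(R x R') with unit b(singleton). *)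
Definition is_burnside_ring (B : comPzRingType) (b : finRack -> B) : Prop :=
  [/\ additive_invariant b,
      (forall (A : zmodType) (a : finRack -> A), additive_invariant a ->
          exists f : {additive B -> A}, forall R, f (b R) = a R),
      (forall (A : zmodType) (f g : {additive B -> A}),
          (forall R, f (b R) = g (b R)) -> f =1 g),
      (forall R R' : finRack, b (prod_rack R R') = (b R * b R')%R) &
      b unit_rack = 1%R].

Definition rack_mors {C : Type} (opC : C -> C -> C) (R : finRack) : set (C -> R) :=
  [set f | is_rack_morphism opC (@fr_op R) f].

(* |Mor(C, R)| (the cardinality of the set of morphisms; 0 if infinite) *)
Definition mor_count {C : Type} (opC : C -> C -> C) (R : finRack) : nat :=
  #|` fset_set (@rack_mors C opC R)|%fset.

From HB Require Import structures.
From mathcomp Require Import all_boot all_order all_algebra.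
From mathcomp Require Import boolp classical_sets cardinality finmap.
Set Implicit Arguments. Unset Strict Implicit. Unset Printing Implicit Defensive.
Import GRing.Theory.
Local Open Scope classical_set_scope.

(* The equalizer of two rack morphisms out of C is a subrack, so a morphism
   is determined by the images of finitely many generators: Mor(C, R) embeds
   into R^k, and we count the k-tuples of generator images instead.
   If R decomposes into S and T, then T is the complement of S and both are
   stable under every left multiplication of R; as C is connected, the image
   of a morphism lies entirely in S or entirely in T, whence
   Mor(C, R) = Mor(C, S) + Mor(C, T).  A morphism into R x R' is a pair of
   morphisms, and there is exactly one morphism into the singleton.
   The additive map Phi_C given by the universal property of B(R) is then
   multiplicative on the generators b(R); since both sides of
   Phi(x y) = Phi(x) Phi(y) are additive in x and in y, uniqueness of
   additive extensions makes Phi multiplicative everywhere. *)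

Lemma finite_set_inj (X : Type) (T : finType) (A : set X) (F : X -> T) :
  {in A &, injective F} -> finite_set A.
Proof.
by move=> Finj; rewrite -(eq_finite_set (inj_card_eq Finj)); exact: finite_finset.
Qed.

Lemma card_fset_set_inj (X : choiceType) (T : finType) (A : set X) (F : X -> T) :
  {in A &, injective F} ->
  #|` fset_set A|%fset = #|[set t | `[< (F @` A) t >]]%SET|.
Proof.
move=> Finj; have finA := finite_set_inj Finj.
have -> : #|` fset_set A|%fset = #|` (F @` fset_set A)%fset|%fset.
  by rewrite card_in_imfset // => a b; rewrite !in_fset_set //; apply: Finj.
rewrite -fset_set_image // -card_finset; congr (#|` _|)%fset.
by apply/fsetP => t; rewrite in_fset_set ?inE //; exact: finite_finset.
Qed.

Definition ffun_map (I : finType) (T U : Type) (h : T -> U) (t : {ffun I -> T}) :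
  {ffun I -> U} := [ffun i => h (t i)].

Lemma ffun_map_inj (I : finType) (T U : Type) (h : T -> U) :
  injective h -> injective (@ffun_map I T U h).
Proof.
move=> hinj t t' /ffunP e; apply/ffunP => i.
by apply: hinj; have := e i; rewrite !ffunE.
Qed.

Section FiniteRacks.
Variable R : finRack.

Lemma fr_op_inj (a : R) : injective (fr_op a).
Proof. exact: bij_inj ((fr_ax R).1 a). Qed.

Lemma subrack_op_mem (S : {set R}) :
  is_subrack (@fr_op R) [set x | x \in S] ->
  forall r w, r \in S -> (fr_op r w \in S) = (w \in S).
Proof.
move=> hS r w rS; have E := hS r rS; apply/idP/idP => H.
  have : [set x | x \in S] (fr_op r w) by [].
  by rewrite -E => -[w' Hw' /fr_op_inj <-].
have : (fr_op r @` [set x | x \in S]) (fr_op r w) by exists w.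
by rewrite E.
Qed.

Lemma decomposition_setC (S T : {set R}) :
  (S :&: T)%SET = finset.set0 -> (S :|: T)%SET = finset.setT -> T = (~: S)%SET.
Proof.
move=> /finset.setP I /finset.setP U; apply/finset.setP => x.
by move: (I x) (U x); rewrite !inE; case: (x \in S); case: (x \in T).
Qed.

Lemma subrack_complement_op_mem (S : {set R}) :
  is_subrack (@fr_op R) [set x | x \in S] ->
  is_subrack (@fr_op R) [set x | x \in ~: S] ->
  forall r w, (fr_op r w \in S) = (w \in S).
Proof.
move=> hS hSc r w; have [rS | rSc] := boolP (r \in S); first exact: subrack_op_mem.
apply: negb_inj; rewrite -!finset.in_setC.
by apply: subrack_op_mem; rewrite ?finset.in_setC.
Qed.

Lemma rack_iso_sym (R' : finRack) : rack_iso R R' -> rack_iso R' R.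
Proof.
move=> [f [fbij fmor]]; have [g fK gK] := fbij.
exists g; split; first by exists f.
by move=> a b; apply: (bij_inj fbij); rewrite fmor !gK.
Qed.

End FiniteRacks.

Section MorphismsFromConnectedRacks.
Variables (C : Type) (opC : C -> C -> C).
Hypothesis hrack : is_rack opC.
Hypothesis hconn : is_connected_rack opC.

Lemma morph_equalizer_subrack (U : Type) (opU : U -> U -> U) (m1 m2 : C -> U) :
  (forall u, injective (opU u)) ->
  is_rack_morphism opC opU m1 -> is_rack_morphism opC opU m2 ->
  is_subrack opC [set x | m1 x = m2 x].
Proof.
move=> opU_inj h1 h2 s /= Hs; apply/seteqP; split.
  by move=> _ [y /= Hy <-]; rewrite /= h1 h2 Hs Hy.
move=> y /= Hy; have [h hK Kh] := hrack.1 s.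
exists (h y); last by rewrite Kh.
by apply: (opU_inj (m2 s)); rewrite -h2 -{1}Hs -h1 Kh.
Qed.

Lemma connected_morph_pred_const (U : Type) (opU : U -> U -> U) (P : pred U)
    (m : C -> U) :
  is_rack_morphism opC opU m -> (forall u v, P (opU u v) = P v) ->
  forall c x, P (m c) = P (m x).
Proof.
move=> hm Pop c x; have [g Hg <-] := hconn.2 x c.
elim: Hg => {g} [//|a g _ IH|a g h _ IH _ Kh] /=; first by rewrite hm Pop.
by rewrite -IH -{2}(Kh (g x)) hm Pop.
Qed.

Variables (k : nat) (gens : 'I_k -> C).
Hypothesis hgens :
  forall S : set C, is_subrack opC S -> range gens `<=` S -> S = setT.

Lemma morph_eq_gens (U : Type) (opU : U -> U -> U) (m1 m2 : C -> U) :
  (forall u, injective (opU u)) ->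
  is_rack_morphism opC opU m1 -> is_rack_morphism opC opU m2 ->
  (forall i, m1 (gens i) = m2 (gens i)) -> m1 = m2.
Proof.
move=> opU_inj h1 h2 e; apply: funext => x.
have E : [set x | m1 x = m2 x] = setT.
  by apply: hgens; [exact: morph_equalizer_subrack | move=> _ [i _ <-]; exact: e].
by have : [set x | m1 x = m2 x] x by rewrite E.
Qed.

Definition gens_values (R : finRack) (m : C -> R) : {ffun 'I_k -> R} :=
  [ffun i => m (gens i)].

Definition mor_values (R : finRack) : {set {ffun 'I_k -> R}} :=
  [set t | `[< (gens_values (R:=R) @` @rack_mors C opC R) t >]]%SET.

Lemma mor_valuesP (R : finRack) (t : {ffun 'I_k -> R}) :
  reflect (exists2 m, is_rack_morphism opC (@fr_op R) m & gens_values m = t)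
          (t \in mor_values R).
Proof. by rewrite inE; apply: asboolP. Qed.

Lemma gens_values_inj (R : finRack) :
  {in @rack_mors C opC R &, injective (gens_values (R:=R))}.
Proof.
move=> m1 m2; rewrite !in_setE => h1 h2 /ffunP e.
by apply: (morph_eq_gens (@fr_op_inj R)) => // i; have := e i; rewrite !ffunE.
Qed.

Lemma finite_rack_mors (R : finRack) : finite_set (@rack_mors C opC R).
Proof. exact: finite_set_inj (@gens_values_inj R). Qed.

Lemma mor_count_values (R : finRack) : mor_count opC R = #|mor_values R|.
Proof. exact: card_fset_set_inj (@gens_values_inj R). Qed.

Lemma gens_values_comp (R1 R2 : finRack) (h : R1 -> R2) (m : C -> R1) :
  ffun_map h (gens_values m) = gens_values (h \o m).
Proof. by apply/ffunP => i; rewrite !ffunE. Qed.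

Lemma ffun_map_mor_values (R1 R2 : finRack) (h : R1 -> R2) t :
  is_rack_morphism (@fr_op R1) (@fr_op R2) h ->
  t \in mor_values R1 -> ffun_map h t \in mor_values R2.
Proof.
move=> hmor /mor_valuesP [m hm <-]; rewrite gens_values_comp.
by apply/mor_valuesP; exists (h \o m) => // a b /=; rewrite hm hmor.
Qed.

Lemma card_mor_values_le (R1 R2 : finRack) (h : R1 -> R2) :
  injective h -> is_rack_morphism (@fr_op R1) (@fr_op R2) h ->
  #|mor_values R1| <= #|mor_values R2|.
Proof.
move=> hinj hmor; rewrite -(card_imset _ (ffun_map_inj hinj)).
apply/subset_leq_card/fintype.subsetP => _ /imsetP [t tM ->].
exact: ffun_map_mor_values.
Qed.

Lemma card_mor_values_iso (R1 R2 : finRack) :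
  rack_iso R1 R2 -> #|mor_values R1| = #|mor_values R2|.
Proof.
have le R R' : rack_iso R R' -> #|mor_values R| <= #|mor_values R'|.
  by move=> [f [/bij_inj finj fmor]]; exact: card_mor_values_le fmor.
by move=> iso; apply/eqP; rewrite eqn_leq !le //; exact: rack_iso_sym.
Qed.

Lemma card_mor_values_prod (R R' : finRack) :
  #|mor_values (prod_rack R R')| = #|mor_values R| * #|mor_values R'|.
Proof.
pose G (p : {ffun 'I_k -> prod_rack R R'}) := (ffun_map fst p, ffun_map snd p).
have Ginj : injective G.
  move=> p q [/ffunP e1 /ffunP e2]; apply/ffunP => i.
  by move: (e1 i) (e2 i); rewrite !ffunE; case: (p i) (q i) => ? ? [? ?] /= -> ->.
rewrite -cardsX -(card_imset _ Ginj); apply: eq_card => -[t t'].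
rewrite finset.in_setX; apply/imsetP/andP => [[p pM [-> ->]] | [/mor_valuesP [m hm <-]]].
  by split; apply: ffun_map_mor_values pM.
move=> /mor_valuesP [m' hm' <-].
exists (gens_values (fun c => (m c, m' c) : prod_rack R R')).
  by apply/mor_valuesP; eexists => // a b; rewrite /= hm hm'.
by congr pair; apply/ffunP => i; rewrite !ffunE.
Qed.

Lemma card_mor_values_unit : #|mor_values unit_rack| = 1%N.
Proof.
suff -> : mor_values unit_rack = finset.setT.
  by rewrite cardsT card_ffun card_unit exp1n.
apply/finset.setP => t; rewrite finset.in_setT; apply/mor_valuesP.
exists (fun _ => tt) => //.
by apply/ffunP => i; rewrite ffunE; case: (t i).
Qed.

Lemma gens_values_subrack (R : finRack) (S : {set R})
    (hS : is_subrack (@fr_op R) [set x | x \in S]) (m : C -> R) :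
  is_rack_morphism opC (@fr_op R) m -> (forall c, m c \in S) ->
  gens_values m \in ffun_map val @: mor_values (subrack hS).
Proof.
move=> hm mS; apply/imsetP.
exists (gens_values (fun c => exist _ (m c) (mS c) : subrack hS)).
  by apply/mor_valuesP; eexists => // a b; apply: val_inj; exact: hm.
by apply/ffunP => i; rewrite !ffunE.
Qed.

Section Decomposition.
Variables (R : finRack) (S : {set R}).
Hypothesis hS : is_subrack (@fr_op R) [set x | x \in S].
Hypothesis hSc : is_subrack (@fr_op R) [set x | x \in ~: S].

Let VS := ffun_map val @: mor_values (subrack hS).
Let VSc := ffun_map val @: mor_values (subrack hSc).

Lemma mor_values_decomposition : mor_values R = (VS :|: VSc)%SET.
Proof.
have [x0 _] := hconn.1.
have const m : is_rack_morphism opC (@fr_op R) m -> forall c, (m c \in S) = (m x0 \in S).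
  move=> hm c; apply: (connected_morph_pred_const (P := fun x => x \in S) hm).
  exact: subrack_complement_op_mem.
apply/finset.setP => t; apply/idP/idP => [/mor_valuesP [m hm <-] | ].
  rewrite finset.in_setU; have [mS | mSc] := boolP (m x0 \in S).
    by rewrite gens_values_subrack // => c; rewrite const.
  by rewrite (gens_values_subrack hSc) ?orbT // => c; rewrite finset.in_setC const.
by case/finset.setUP => /imsetP [p pM ->]; apply: ffun_map_mor_values pM.
Qed.

(* The values on the generators determine the morphism, and C is nonempty. *)
Lemma mor_values_subrack_disjoint : (VS :&: VSc)%SET = finset.set0.
Proof.
have [x0 _] := hconn.1.
apply/finset.setP => t; rewrite finset.in_setI finset.in_set0.
apply/negP => /andP [/imsetP [p1 /mor_valuesP [m1 hm1 <-] ->]].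
case/imsetP => p2 /mor_valuesP [m2 hm2 <-] /ffunP E.
have E' : val \o m1 = val \o m2.
  apply: (morph_eq_gens (@fr_op_inj R)) => [a b|a b|i] /=; rewrite ?hm1 ?hm2 //.
  by have := E i; rewrite !ffunE.
have /= E0 := congr1 (fun f => f x0) E'.
by have := valP (m2 x0); rewrite /= finset.in_setC -E0 (valP (m1 x0)).
Qed.

Lemma card_mor_values_subrack_complement :
  #|mor_values R| = #|mor_values (subrack hS)| + #|mor_values (subrack hSc)|.
Proof.
rewrite mor_values_decomposition cardsU mor_values_subrack_disjoint cards0 subn0.
by rewrite !card_imset //; apply: ffun_map_inj; exact: val_inj.
Qed.

End Decomposition.

Lemma card_mor_values_decomposition (R : finRack) (S T : {set R})
    (hS : is_subrack (@fr_op R) [set x | x \in S])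
    (hT : is_subrack (@fr_op R) [set x | x \in T]) :
  (S :&: T)%SET = finset.set0 -> (S :|: T)%SET = finset.setT ->
  #|mor_values R| = #|mor_values (subrack hS)| + #|mor_values (subrack hT)|.
Proof.
move=> I U; have eT := decomposition_setC I U; subst T.
exact: card_mor_values_subrack_complement.
Qed.

End MorphismsFromConnectedRacks.

Section BurnsideRing.
Local Open Scope ring_scope.
Variables (B : comPzRingType) (A : pzRingType).

Definition rmorphism_of_additive (f : {additive B -> A})
    (fM : GRing.monoid_morphism f) : {rmorphism B -> A} :=
  HB.pack_for {rmorphism B -> A} (f : B -> A)
    (GRing.isNmodMorphism.Build B A f (raddf0 f, raddfD f))
    (GRing.isMonoidMorphism.Build B A f fM).

Lemma burnside_rmorphism (b : finRack -> B) (a : finRack -> A) :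
  is_burnside_ring b -> additive_invariant a ->
  (forall R R', a (prod_rack R R') = a R * a R') -> a unit_rack = 1 ->
  exists Phi : {rmorphism B -> A}, forall R, Phi (b R) = a R.
Proof.
move=> [_ univ uniq bM b1] ha aM a1; have [Phi PhiE] := univ _ _ ha.
have PhiM_b R y : Phi (b R * y) = Phi (b R) * Phi y.
  apply: (uniq _ (Phi \o GRing.mull_fun (b R) idfun) (GRing.mull_fun (Phi (b R)) Phi)).
  by move=> R' /=; rewrite -bM !PhiE aM.
have PhiM x y : Phi (x * y) = Phi x * Phi y.
  apply: (uniq _ (Phi \o GRing.mulr_fun y idfun) (GRing.mulr_fun (Phi y) Phi)).
  by move=> R /=; rewrite PhiM_b.
have Phi1 : Phi 1 = 1 by rewrite -b1 PhiE.
by exists (rmorphism_of_additive (Phi1, PhiM)).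
Qed.

End BurnsideRing.

Theorem proposition5p1 (C : Type) (opC : C -> C -> C)
  (hrack : is_rack opC) (hconn : is_connected_rack opC)
  (hfg : is_fin_gen_rack opC) :
  (forall R : finRack, finite_set (@rack_mors C opC R)) /\
  additive_invariant (fun R : finRack => Posz (mor_count opC R)) /\
  (forall (B : comPzRingType) (b : finRack -> B), is_burnside_ring b ->
     exists Phi : {rmorphism B -> int},
       forall R : finRack, Phi (b R) = Posz (mor_count opC R)).
Proof.
have [k [gens hgens]] := hfg.
have count R := mor_count_values hrack hgens R.
have ainv : additive_invariant (fun R : finRack => Posz (mor_count opC R)).
  split=> [R1 R2 iso | R S T hS hT I U]; rewrite !count.
    by rewrite (card_mor_values_iso opC gens iso).
  by rewrite (card_mor_values_decomposition hrack hconn hgens hS hT I U) PoszD.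
split; first exact: (finite_rack_mors hrack hgens).
split=> // B b hB; apply: burnside_rmorphism => // [R R'|].
  by rewrite !count card_mor_values_prod PoszM.
by rewrite count card_mor_values_unit.
Qed.
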